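(* Let $\Sigma:\ \dot x=-ZB\mathcal{K}(x^* )B^T\mathrm{Exp}\big(Z^T\mathrm{Ln}(\tfrac{x}{x^*})\big)$ be a balanced mass action chemical reaction network with thermodynamic equilibrium $x^*\in\mathbb{R}^m_+$, and let $\hat\Sigma:\ \dot x=-\hat Z\hat B\hat{\mathcal{K}}(x^* )\hat B^T\mathrm{Exp}\big(\hat Z^T\mathrm{Ln}(\tfrac{x}{x^*})\big)$ be its reduced-order model obtained by deleting a subset $\mathcal{V}_r$ of complexes (as described in the context). Denote by $\mathcal{E}$ and $\hat{\mathcal{E}}$ the sets of equilibria (points $x\in\mathbb{R}^m_+$ where the right-hand side vanishes) of $\Sigma$ and $\hat\Sigma$, respectively. Then $\mathcal{E}\subset\hat{\mathcal{E}}$. Furthermore, if $\Sigma$ has deficiency zero then so does $\hat\Sigma$.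
   Context: Network $\Sigma$: $m$ species with concentrations $x\in\mathbb{R}^m_+$, $c$ complexes, $r$ reactions. $Z$ ($m\times c$) has as $\rho$-th column the species composition of complex $\rho$. The complex graph has the complexes as vertices and for each reaction $j$ an edge from its substrate complex $\mathcal{S}_j$ to its product complex $\mathcal{P}_j$; $B$ is its $c\times r$ incidence matrix ($-1$ at tail, $+1$ at head). Mass action rates $v_j(x)=k_j^{\mathrm{forw}}\exp(Z_{\mathcal{S}_j}^T\mathrm{Ln}(x))-k_j^{\mathrm{rev}}\exp(Z_{\mathcal{P}_j}^T\mathrm{Ln}(x))$; $x^*$ with $v(x^* )=0$ is a thermodynamic equilibrium; balanced reaction constants $\kappa_j(x^* )=k_j^{\mathrm{forw}}\exp(Z_{\mathcal{S}_j}^T\mathrm{Ln}(x^* ))>0$, $\mathcal{K}(x^* )=\mathrm{diag}(\kappa_j(x^* ))$, so that $ZBv(x)=-ZB\mathcal{K}(x^* )B^T\mathrm{Exp}(Z^T\mathrm{Ln}(x/x^* ))$. Reduction: let $L:=B\mathcal{K}(x^* )B^T$ (a symmetric weighted Laplacian of the complex graph). Choose a subset $\mathcal{V}_r$ of complexes to delete and, after permuting the complexes so that $\mathcal{V}_r$ comes last, partition $L=\begin{bmatrix}L_{11}&L_{12}\\L_{21}&L_{22}\end{bmatrix}$ and $Z=\begin{bmatrix}Z_1&Z_2\end{bmatrix}$ accordingly, with $L_{22}$ invertible. The Schur complement $\hat L:=L_{11}-L_{12}L_{22}^{-1}L_{21}$ is the weighted Laplacian $\hat B\hat{\mathcal{K}}(x^*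 )\hat B^T$ of a directed graph on the remaining complexes, with incidence matrix $\hat B$ and positive diagonal weight matrix $\hat{\mathcal{K}}(x^* )$; set $\hat Z:=Z_1$. The deficiency of a network with complex stoichiometric matrix $Z$ and incidence matrix $B$ is $\operatorname{rank}B-\operatorname{rank}ZB$; deficiency zero means this equals $0$ (equivalently $\ker Z\cap\operatorname{im}B=0$). $\mathrm{Ln},\mathrm{Exp}$ are componentwise logarithm/exponential, $x/x^*$ the componentwise quotient. *)

From HB Require Import structures.
From mathcomp Require Import all_boot all_order all_algebra.
From mathcomp Require Import reals sequences exp.
Set Implicit Arguments. Unset Strict Implicit. Unset Printing Implicit Defensive.
Import Order.TTheory GRing.Theory Num.Theory.
Local Open Scope ring_scope.

Section CRN.
Variable R : realType.

Definition is_incidence (c r : nat) (B : 'M[R]_(c, r)) : Prop :=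
  forall j : 'I_r, exists s t : 'I_c,
    s != t /\ B s j = -1 /\ B t j = 1 /\
    (forall i : 'I_c, i != s -> i != t -> B i j = 0).

Definition is_complex_matrix (m c : nat) (Z : 'M[R]_(m, c)) : Prop :=
  forall i j, exists n : nat, Z i j = n%:R.

Definition wlaplacian (c r : nat) (B : 'M[R]_(c, r)) (k : 'rV[R]_r) : 'M[R]_c :=
  B *m diag_mx k *m B^T.

Definition Expv (n : nat) (v : 'cV[R]_n) : 'cV[R]_n := \col_i expR (v i 0).
Definition Lnv (n : nat) (v : 'cV[R]_n) : 'cV[R]_n := \col_i ln (v i 0).
Definition divv (n : nat) (x y : 'cV[R]_n) : 'cV[R]_n := \col_i (x i 0 / y i 0).

Definition positive_vec (n : nat) (x : 'cV[R]_n) : Prop := forall i, 0 < x i 0.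

Definition crn_rhs (m c : nat) (Z : 'M[R]_(m, c)) (L : 'M[R]_c)
  (xs x : 'cV[R]_m) : 'cV[R]_m :=
  - (Z *m L *m Expv (Z^T *m Lnv (divv x xs))).

Definition is_equilibrium (m c : nat) (Z : 'M[R]_(m, c)) (L : 'M[R]_c)
  (xs x : 'cV[R]_m) : Prop :=
  positive_vec x /\ crn_rhs Z L xs x = 0.

Definition deficiency (m c r : nat) (Z : 'M[R]_(m, c)) (B : 'M[R]_(c, r)) : nat :=
  (\rank B - \rank (Z *m B))%N.

Definition schur (c1 c2 : nat) (L : 'M[R]_(c1 + c2)) : 'M[R]_c1 :=
  ulsubmx L - ursubmx L *m invmx (drsubmx L) *m dlsubmx L.

End CRN.

From HB Require Import structures.
From mathcomp Require Import all_boot all_order all_algebra.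
From mathcomp Require Import reals sequences exp.
From mathcomp Require Import zify.
Import Order.TTheory GRing.Theory Num.Theory.
Local Open Scope ring_scope.
Set Implicit Arguments. Unset Strict Implicit.

(* Write L = B K B^T with K > 0 diagonal.  At an equilibrium x, with
   u = Z^T Ln(x/xs), pairing Z L Exp(u) = 0 with Ln(x/xs) gives
   u^T L Exp(u) = sum_j K_j (u_t - u_s)(e^u_t - e^u_s) = 0 over the edges
   s -> t; every term is nonnegative since exp is increasing, so
   B^T Exp(u) = 0 and L Exp(u) = 0.  Eliminating the deleted complexes from
   L y = 0 leaves (Schur L) y_1 = 0, which is the reduced equilibrium equation.
   For the deficiency, ker B^T is the left kernel of L, so B^ = (Schur L) D
   for some D.  A vector W with Z_1 B^ W = 0 lifts through the Schur complement
   to V with L V = [B^ W; 0]; then Z B (K B^T V) = Z_1 B^ W = 0, and deficiency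
   zero of the full network gives L V = 0, hence B^ W = 0. *)

Section MassActionReduction.
Variable R : realType.

Lemma diag_form_eq0 (r : nat) (k : 'rV[R]_r) (x y : 'cV[R]_r) :
  (forall j, 0 < k 0 j) -> (forall j, 0 <= x j 0 * y j 0) ->
  x^T *m diag_mx k *m y = 0 -> forall j, x j 0 * y j 0 = 0.
Proof.
move=> k_gt0 xy_ge0 /(congr1 (fun M : 'M[R]_1 => M 0 0)).
rewrite !mxE; under eq_bigr do rewrite mul_mx_diag !mxE.
move=> sum_eq0 j; apply/eqP.
have /eqP : x j 0 * k 0 j * y j 0 = 0.
  apply: (psumr_eq0P _ sum_eq0) => // i _.
  by rewrite mulrAC mulr_ge0 // ltW.
by rewrite mulrAC mulf_eq0 (gt_eqF (k_gt0 j)) orbF.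
Qed.

Lemma trmx_wlaplacian (c r : nat) (B : 'M[R]_(c, r)) (k : 'rV[R]_r) :
  (wlaplacian B k)^T = wlaplacian B k.
Proof. by rewrite /wlaplacian !trmx_mul trmxK tr_diag_mx mulmxA. Qed.

Lemma wlaplacian_lker (c r : nat) (B : 'M[R]_(c, r)) (k : 'rV[R]_r)
    (u : 'rV[R]_c) :
  (forall j, 0 < k 0 j) -> u *m wlaplacian B k = 0 -> u *m B = 0.
Proof.
move=> k_gt0 uL0.
have form0 : (u *m B)^T^T *m diag_mx k *m (u *m B)^T = 0.
  rewrite trmxK trmx_mul !mulmxA -(mulmxA u) -(mulmxA u).
  by rewrite -/(wlaplacian B k) uL0 mul0mx.
have entry_sqr_ge0 i : 0 <= (u *m B)^T i 0 * (u *m B)^T i 0.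
  by rewrite -expr2 sqr_ge0.
apply/rowP => j; have /eqP := diag_form_eq0 k_gt0 entry_sqr_ge0 form0 j.
by rewrite mulf_eq0 orbb !mxE => /eqP.
Qed.

Lemma tr_submx_wlaplacian (c r : nat) (B : 'M[R]_(c, r)) (k : 'rV[R]_r) :
  (forall j, 0 < k 0 j) -> (B^T <= wlaplacian B k)%MS.
Proof.
move=> k_gt0; set L := wlaplacian B k.
have L_sub : (L <= B^T)%MS by rewrite /L /wlaplacian submxMl.
have ker_sub : (kermx L <= kermx B)%MS.
  rewrite sub_kermx; apply/eqP/row_matrixP => i.
  by rewrite row_mul row0 (wlaplacian_lker k_gt0) // -row_mul mulmx_ker row0.
have := mxrankS ker_sub; rewrite !mxrank_ker => rk_le.
have rk_eq : \rank B^T = \rank L.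
  apply/anti_leq; rewrite (mxrankS L_sub) andbT mxrank_tr.
  by have := rank_leq_row L; have := rank_leq_row B; lia.
by have /andP [] : (L == B^T)%MS by rewrite -(mxrank_leqif_eq L_sub).2 rk_eq.
Qed.

Lemma incidence_edge (c r : nat) (B : 'M[R]_(c, r)) : is_incidence B ->
  forall j, exists s t : 'I_c, forall f : 'cV[R]_c,
    (B^T *m f) j 0 = f t 0 - f s 0.
Proof.
move=> B_inc j; have [s [t [s_neq_t [Bs [Bt B0]]]]] := B_inc j.
exists s, t => f; rewrite mxE (bigD1 s) //= (bigD1 t) 1?eq_sym //=.
rewrite big1 => [|i /andP [i_neq_s i_neq_t]]; last by rewrite mxE B0 ?mul0r.
by rewrite !mxE Bs Bt mulN1r mul1r addr0 addrC.
Qed.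

Lemma mul_subr_expR_ge0 (a b : R) : 0 <= (b - a) * (expR b - expR a).
Proof.
have [ab|ba] := leP a b; first by rewrite mulr_ge0 // subr_ge0 ?ler_expR.
by rewrite -mulrNN mulr_ge0 // opprB subr_ge0 ?ler_expR // ltW.
Qed.

Lemma mul_subr_expR_eq0 (a b : R) :
  (b - a) * (expR b - expR a) = 0 -> expR b - expR a = 0.
Proof.
by move/eqP; rewrite mulf_eq0 => /orP [|/eqP //]; rewrite subr_eq0 => /eqP ->; rewrite subrr.
Qed.

Lemma wlaplacian_Expv_eq0 (c r : nat) (B : 'M[R]_(c, r)) (k : 'rV[R]_r)
    (u : 'cV[R]_c) :
  is_incidence B -> (forall j, 0 < k 0 j) ->
  u^T *m wlaplacian B k *m Expv u = 0 -> wlaplacian B k *m Expv u = 0.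
Proof.
move=> B_inc k_gt0 uLE0.
suff BE0 : B^T *m Expv u = 0 by rewrite /wlaplacian -mulmxA BE0 mulmx0.
have form0 : (B^T *m u)^T *m diag_mx k *m (B^T *m Expv u) = 0.
  by rewrite trmx_mul trmxK -uLE0 /wlaplacian !mulmxA.
have edge_ge0 j : 0 <= (B^T *m u) j 0 * (B^T *m Expv u) j 0.
  by have [s [t Bj]] := incidence_edge B_inc j; rewrite !Bj !mxE mul_subr_expR_ge0.
apply/matrixP => j i; rewrite (ord1 i) [RHS]mxE.
have := diag_form_eq0 k_gt0 edge_ge0 form0 j.
have [s [t Bj]] := incidence_edge B_inc j; rewrite !Bj !mxE.
exact: mul_subr_expR_eq0.
Qed.

Lemma usubmx_Expv (c1 c2 : nat) (v : 'cV[R]_(c1 + c2)) :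
  usubmx (Expv v) = Expv (usubmx v).
Proof. by apply/matrixP => i j; rewrite (ord1 j) !mxE. Qed.

(* The unique vector with upper block V whose image under L vanishes on the
   deleted complexes. *)
Definition schur_lift (c1 c2 p : nat) (L : 'M[R]_(c1 + c2)) (V : 'M[R]_(c1, p))
  : 'M[R]_(c1 + c2, p) :=
  col_mx V (- (invmx (drsubmx L) *m dlsubmx L *m V)).

Lemma mul_schur_lift (c1 c2 p : nat) (L : 'M[R]_(c1 + c2)) (V : 'M[R]_(c1, p)) :
  drsubmx L \in unitmx -> L *m schur_lift L V = col_mx (schur L *m V) 0.
Proof.
move=> L22_unit; rewrite -{1}[L]submxK mul_block_col /schur mulmxBl.
by rewrite !mulmxN !mulmxA mulmxV // mul1mx subrr.
Qed.

Lemma schur_mul_usubmx_eq0 (c1 c2 p : nat) (L : 'M[R]_(c1 + c2))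
    (y : 'M[R]_(c1 + c2, p)) :
  drsubmx L \in unitmx -> L *m y = 0 -> schur L *m usubmx y = 0.
Proof.
move=> L22_unit Ly0.
have y_lift : y = schur_lift L (usubmx y).
  move: Ly0; rewrite -{1}[L]submxK -{1}[y]vsubmxK mul_block_col.
  move=> /eqP; rewrite col_mx_eq0 => /andP [_]; rewrite addrC addr_eq0 => /eqP low.
  rewrite -[LHS]vsubmxK /schur_lift -(mulKmx L22_unit (dsubmx y)) low.
  by rewrite mulmxN mulmxA.
move: Ly0; rewrite {1}y_lift mul_schur_lift // => /eqP.
by rewrite col_mx_eq0 => /andP [/eqP].
Qed.

Lemma deficiency_eq0P (m c r : nat) (A : 'M[R]_(m, c)) (C : 'M[R]_(c, r)) :
  deficiency A C = 0%N <->
  (forall p (W : 'M[R]_(r, p)), A *m C *m W = 0 -> C *m W = 0).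
Proof.
have ker_sub : (kermx C^T <= kermx (A *m C)^T)%MS.
  by rewrite sub_kermx trmx_mul mulmxA mulmx_ker mul0mx.
have rkAC := mxrankM_maxr A C; have rkC := rank_leq_col C.
rewrite /deficiency; split=> [/eqP | ker_eq].
  rewrite subn_eq0 => rk_le p W ACW0.
  have ker_eq : (kermx C^T == kermx (A *m C)^T)%MS.
    rewrite -(mxrank_leqif_eq ker_sub).2 !mxrank_ker !mxrank_tr.
    by apply/eqP; congr (_ - _)%N; apply/anti_leq; rewrite rk_le rkAC.
  have : (W^T <= kermx C^T)%MS.
    by rewrite (eqmxP ker_eq) sub_kermx -trmx_mul ACW0 trmx0.
  by rewrite sub_kermx -trmx_mul => /eqP/(congr1 trmx); rewrite trmxK trmx0.
set K := kermx (A *m C)^T.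
have CK0 : C *m K^T = 0.
  by apply: ker_eq; apply: trmx_inj; rewrite trmx_mul trmx0 trmxK mulmx_ker.
have : (K <= kermx C^T)%MS by rewrite sub_kermx -[K]trmxK -trmx_mul CK0 trmx0.
move/mxrankS; rewrite !mxrank_ker !mxrank_tr => rk_le.
by have := rank_leq_col (A *m C); lia.
Qed.

Lemma equilibrium_schur (m c1 c2 r : nat) (Z : 'M[R]_(m, c1 + c2))
    (B : 'M[R]_(c1 + c2, r)) (k : 'rV[R]_r) (xs x : 'cV[R]_m) :
  is_incidence B -> (forall j, 0 < k 0 j) ->
  drsubmx (wlaplacian B k) \in unitmx ->
  is_equilibrium Z (wlaplacian B k) xs x ->
  is_equilibrium (lsubmx Z) (schur (wlaplacian B k)) xs x.
Proof.
move=> B_inc k_gt0 L22_unit [x_gt0 /eqP]; rewrite oppr_eq0 => /eqP ZLE0.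
split=> //; set L := wlaplacian B k in ZLE0 *.
set v := Lnv (divv x xs) in ZLE0 *; set u := Z^T *m v in ZLE0 *.
have LE0 : L *m Expv u = 0.
  apply: wlaplacian_Expv_eq0 => //.
  by rewrite /u trmx_mul trmxK -(mulmxA _ Z L) -(mulmxA _ (Z *m L)) ZLE0 mulmx0.
rewrite /crn_rhs trmx_lsub mul_usub_mx -/u -usubmx_Expv -mulmxA.
by rewrite schur_mul_usubmx_eq0 // mulmx0 oppr0.
Qed.

Lemma deficiency0_schur (m c1 c2 r rh : nat) (Z : 'M[R]_(m, c1 + c2))
    (B : 'M[R]_(c1 + c2, r)) (k : 'rV[R]_r) (Bh : 'M[R]_(c1, rh))
    (kh : 'rV[R]_rh) :
  (forall j, 0 < k 0 j) -> (forall j, 0 < kh 0 j) ->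
  drsubmx (wlaplacian B k) \in unitmx ->
  schur (wlaplacian B k) = wlaplacian Bh kh ->
  deficiency Z B = 0%N -> deficiency (lsubmx Z) Bh = 0%N.
Proof.
move=> k_gt0 kh_gt0 L22_unit schurL def0; set L := wlaplacian B k in schurL *.
apply/deficiency_eq0P => p W ZBhW0.
have [D BhD] := submxP (tr_submx_wlaplacian Bh kh_gt0).
have Bh_eq : Bh = schur L *m D^T.
  by rewrite -[Bh]trmxK BhD trmx_mul trmx_wlaplacian schurL.
set V := schur_lift L (D^T *m W).
have LV : L *m V = col_mx (Bh *m W) 0 by rewrite mul_schur_lift // Bh_eq mulmxA.
have BV : B *m (diag_mx k *m B^T *m V) = L *m V by rewrite /L /wlaplacian !mulmxA.
have : Z *m B *m (diag_mx k *m B^T *m V) = 0.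
  rewrite -mulmxA BV LV -[Z]hsubmxK mul_row_col mulmx0 addr0.
  by rewrite mulmxA ZBhW0.
move/(proj1 (deficiency_eq0P Z B) def0); rewrite BV LV => /eqP.
by rewrite col_mx_eq0 => /andP [/eqP].
Qed.

End MassActionReduction.

Theorem proposition8 (R : realType) (m c1 c2 r : nat)
  (Z : 'M[R]_(m, c1 + c2)) (B : 'M[R]_(c1 + c2, r)) (kappa : 'rV[R]_r)
  (xs : 'cV[R]_m) :
  is_complex_matrix Z ->
  is_incidence B ->
  (forall j, 0 < kappa 0 j) ->
  positive_vec xs ->
  drsubmx (wlaplacian B kappa) \in unitmx ->
  (forall x : 'cV[R]_m,
     is_equilibrium Z (wlaplacian B kappa) xs x ->
     is_equilibrium (lsubmx Z) (schur (wlaplacian B kappa)) xs x)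
  /\
  (deficiency Z B = 0%N ->
   forall (rh : nat) (Bh : 'M[R]_(c1, rh)) (kh : 'rV[R]_rh),
     is_incidence Bh ->
     (forall j, 0 < kh 0 j) ->
     schur (wlaplacian B kappa) = wlaplacian Bh kh ->
     deficiency (lsubmx Z) Bh = 0%N).
Proof.
move=> _ B_inc kappa_gt0 _ L22_unit; split=> [x|def0 rh Bh kh _ kh_gt0 schurL].
  exact: equilibrium_schur.
exact: deficiency0_schur schurL def0.
Qed.
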